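(* Let $\mathcal{G}=(\mathcal{V},\mathcal{E})$ be a finite, simple, connected graph with shortest-path metric $d_{\mathcal{G}}$, and let each node $i\in\mathcal{V}$ carry a feature vector $\mathbf{x}_i$. Let $\mathcal{M}\subseteq\mathbb{R}^d$ be a Riemannian submanifold with geodesic distance $d_{\mathcal{M}}$, and let $h$ be an injective embedding $i\mapsto h(\mathbf{x}_i)\in\mathcal{M}$ (distinct nodes map to distinct points). Let $\bm{w}\in\mathbb{R}^d$, $b\in\mathbb{R}$, and define the model $f=g\circ h$ with linear solver $g(\bm{z})=\langle \bm{w},\bm{z}\rangle+b$, so that $y_i=\langle \bm{w},h(\mathbf{x}_i)\rangle+b$ for each $i\in\mathcal{V}$. Define $$\delta_c(h)=\max_{i\neq j}\frac{d_{\mathcal{G}}(i,j)}{d_{\mathcal{M}}(h(\mathbf{x}_i),h(\mathbf{x}_j))},\qquad \delta_e(h)=\max_{i\neq j}\frac{d_{\mathcal{M}}(h(\mathbf{x}_i),h(\mathbf{x}_j))}{d_{\mathcal{G}}(i,j)},$$ $$\xi(h)=\min_{i\neq j}\frac{\|h(\mathbf{x}_i)-h(\mathbf{x}_j)\|}{d_{\mathcal{M}}(h(\mathbf{x}_i),h(\mathbf{x}_j))},\qquad \zeta(h)=\max_{i\neq j}\frac{\|h(\mathbf{x}_i)-h(\mathbf{x}_j)\|}{d_{\mathcal{M}}(h(\mathbf{x}_i),h(\mathbf{x}_j))},$$ $$\rho(h,\bm{w})=\min_{i\neq j}\frac{|\langle \bm{w},h(\mathbf{x}_i)-h(\mathbf{x}_j)\rangle|}{\|\bm{w}\|\,\|h(\mathbf{x}_i)-h(\mathbf{x}_j)\|},$$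 where all extrema range over pairs of distinct nodes $i,j\in\mathcal{V}$. If $\rho(h,\bm{w})>0$, then for all distinct $i,j\in\mathcal{V}$, $$\alpha\, d_{\mathcal{G}}(i,j)\le |y_i-y_j|\le \beta\, d_{\mathcal{G}}(i,j),\quad\text{with } \beta=\|\bm{w}\|\,\zeta(h)\,\delta_e(h),\ \ \alpha=\frac{\|\bm{w}\|\,\xi(h)\,\rho(h,\bm{w})}{\delta_c(h)}.$$
   Context: $\langle\cdot,\cdot\rangle$ and $\|\cdot\|$ denote the Euclidean inner product and norm of the ambient space $\mathbb{R}^d$. The quantity $\delta(h)=\delta_c(h)\delta_e(h)$ is called the embedding distortion. *)

From HB Require Import structures.
From mathcomp Require Import all_boot all_order all_algebra.
From mathcomp Require Import reals.
Set Implicit Arguments. Unset Strict Implicit. Unset Printing Implicit Defensive.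
Import Order.TTheory GRing.Theory Num.Theory.
Local Open Scope ring_scope.

Section Defs.
Variable R : realType.

Definition dotr (d : nat) (u v : 'rV[R]_d) : R := \sum_(k < d) u 0 k * v 0 k.
Definition enorm (d : nat) (u : 'rV[R]_d) : R := Num.sqrt (dotr u u).

(* A metric on the subset M of R^d (abstraction of the geodesic distance). *)
Definition is_metric_on (d : nat) (M : pred 'rV[R]_d)
  (dM : 'rV[R]_d -> 'rV[R]_d -> R) : Prop :=
  [/\ forall p q, M p -> M q -> 0 <= dM p q,
      forall p q, M p -> M q -> (dM p q = 0 <-> p = q),
      forall p q, M p -> M q -> dM p q = dM q p &
      forall p q r, M p -> M q -> M r -> dM p r <= dM p q + dM q r].

Variable V : finType.

Definition pair_vals (F : V -> V -> R) : seq R :=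
  [seq F p.1 p.2 | p <- enum [pred p : V * V | p.1 != p.2]].
(* max / min over pairs of distinct nodes (0 if there are no such pairs). *)
Definition max_pairs (F : V -> V -> R) : R :=
  let s := pair_vals F in foldr Num.max (head 0 s) s.
Definition min_pairs (F : V -> V -> R) : R :=
  let s := pair_vals F in foldr Num.min (head 0 s) s.
End Defs.

Definition walk_of_len (V : finType) (e : rel V) (n : nat) (x y : V) : bool :=
  [exists p : n.-tuple V, path e x p && (last x p == y)].

(* Length of a shortest walk from x to y (= #|V| if none, which cannot
   happen in a connected graph since shortest walks have length < #|V|). *)
Definition gdist (V : finType) (e : rel V) (x y : V) : nat :=
  \big[minn/#|V|]_(n < #|V|.+1 | walk_of_len e n x y) n.

(* Every extremal quantity in the statement is a max or min of a ratio f/g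
   over pairs of distinct nodes, so for each such pair it gives f <= max * g
   and min * g <= f.  Chaining these for the ratios geodesic/graph distance,
   chord/geodesic length and |<w, z_i - z_j>| / (|w| |z_i - z_j|), together
   with Cauchy-Schwarz for the upper bound, gives the two-sided estimate. *)
From HB Require Import structures.
From mathcomp Require Import all_boot all_order all_algebra.
From mathcomp Require Import reals.
From mathcomp Require Import ring lra.
Set Implicit Arguments. Unset Strict Implicit. Unset Printing Implicit Defensive.
Import Order.TTheory GRing.Theory Num.Theory.
Local Open Scope ring_scope.

Section FoldrMaxMin.
Variable R : realDomainType.

Lemma foldr_max_ub (s : seq R) x0 x : x \in s -> x <= foldr Num.max x0 s.
Proof.
elim: s => //= a s IHs; rewrite in_cons le_max => /orP[/eqP-> | /IHs ->].
  by rewrite lexx.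
by rewrite orbT.
Qed.

Lemma foldr_min_lb (s : seq R) x0 x : x \in s -> foldr Num.min x0 s <= x.
Proof.
elim: s => //= a s IHs; rewrite in_cons ge_min => /orP[/eqP-> | /IHs ->].
  by rewrite lexx.
by rewrite orbT.
Qed.

Lemma foldr_min_ge0 (s : seq R) x0 :
  0 <= x0 -> all (fun x => 0 <= x) s -> 0 <= foldr Num.min x0 s.
Proof.
by move=> x0_ge0; elim: s => //= a s IHs /andP[a_ge0 /IHs]; rewrite le_min a_ge0.
Qed.

End FoldrMaxMin.

Section RatioChains.
Variable R : realFieldType.

Lemma ratio_chain_lower (a xi rho dc n m D c : R) :
  0 <= a -> 0 <= xi -> 0 <= rho -> 0 < m -> 0 < D ->
  xi * m <= n -> D <= dc * m -> rho * (a * n) <= c -> a * xi * rho / dc * D <= c.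
Proof.
move=> a_ge0 xi_ge0 rho_ge0 m_gt0 D_gt0 xi_le D_le rho_le.
have dc_gt0 : 0 < dc by rewrite -(pmulr_lgt0 _ m_gt0) (lt_le_trans D_gt0 D_le).
rewrite mulrAC ler_pdivrMr //.
have := ler_wpM2l (mulr_ge0 (mulr_ge0 a_ge0 xi_ge0) rho_ge0) D_le.
have := ler_wpM2l (mulr_ge0 (ltW dc_gt0) (mulr_ge0 rho_ge0 a_ge0)) xi_le.
have := ler_wpM2l (ltW dc_gt0) rho_le.
lra.
Qed.

Lemma ratio_chain_upper (a zeta de n m D c : R) :
  0 <= a -> 0 <= n -> 0 < m ->
  n <= zeta * m -> m <= de * D -> c <= a * n -> c <= a * zeta * de * D.
Proof.
move=> a_ge0 n_ge0 m_gt0 n_le m_le c_le.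
have zeta_ge0 : 0 <= zeta by rewrite -(pmulr_lge0 _ m_gt0) (le_trans n_ge0 n_le).
have := ler_wpM2l (mulr_ge0 a_ge0 zeta_ge0) m_le.
have := ler_wpM2l a_ge0 n_le.
lra.
Qed.
End RatioChains.

Section ExtremaOverPairs.
Variables (R : realType) (V : finType).
Implicit Types (F f g : V -> V -> R) (i j : V).

Lemma mem_pair_vals F i j : i != j -> F i j \in pair_vals F.
Proof. by move=> ij; apply/mapP; exists (i, j); rewrite ?mem_enum. Qed.

Lemma max_pairs_ub F i j : i != j -> F i j <= max_pairs F.
Proof. by move=> ij; apply/foldr_max_ub/mem_pair_vals. Qed.

Lemma min_pairs_lb F i j : i != j -> min_pairs F <= F i j.
Proof. by move=> ij; apply/foldr_min_lb/mem_pair_vals. Qed.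

Lemma min_pairs_ge0 F : (forall i j, i != j -> 0 <= F i j) -> 0 <= min_pairs F.
Proof.
move=> F_ge0; have : all (fun x => 0 <= x) (pair_vals F).
  by apply/allP => x /mapP[[i j]]; rewrite mem_enum => ij ->; apply: F_ge0.
rewrite /min_pairs; case: (pair_vals F) => //= a s /andP[a_ge0 s_ge0].
by rewrite le_min a_ge0 foldr_min_ge0.
Qed.

Lemma max_pairs_ratio f g i j :
  i != j -> 0 < g i j -> f i j <= max_pairs (fun i j => f i j / g i j) * g i j.
Proof.
move=> ij g_gt0; rewrite -ler_pdivrMr //.
exact: (max_pairs_ub (fun i j => f i j / g i j)).
Qed.

Lemma min_pairs_ratio f g i j :
  i != j -> 0 < g i j -> min_pairs (fun i j => f i j / g i j) * g i j <= f i j.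
Proof.
move=> ij g_gt0; rewrite -ler_pdivlMr //.
exact: (min_pairs_lb (fun i j => f i j / g i j)).
Qed.

(* Since x / 0 = 0, a positive minimum of ratios forces nonzero denominators. *)
Lemma min_pairs_ratio_den_neq0 f g i j :
  0 < min_pairs (fun i j => f i j / g i j) -> i != j -> g i j != 0.
Proof.
move=> min_gt0 ij; apply/eqP => g0.
have := lt_le_trans min_gt0 (min_pairs_lb (fun i j => f i j / g i j) ij).
by rewrite g0 invr0 mulr0 ltxx.
Qed.

End ExtremaOverPairs.

Section EuclideanSpace.
Variables (R : realType) (d : nat).
Implicit Types u v : 'rV[R]_d.

Lemma dotrBr u v1 v2 : dotr u (v1 - v2) = dotr u v1 - dotr u v2.
Proof. by rewrite /dotr -sumrB; apply: eq_bigr => k _; rewrite !mxE mulrBr. Qed.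

Lemma dotr_ge0 u : 0 <= dotr u u.
Proof. by apply: sumr_ge0 => k _; rewrite -expr2 sqr_ge0. Qed.

Lemma enorm_ge0 u : 0 <= enorm u.
Proof. exact: sqrtr_ge0. Qed.

Lemma dotr_eq0 u v : dotr u u = 0 -> dotr u v = 0.
Proof.
move=> uu0; have u0 k : u 0 k = 0.
  have /psumr_eq0P u2_0 : forall k, true -> 0 <= u 0 k * u 0 k.
    by move=> k' _; rewrite -expr2 sqr_ge0.
  by apply/eqP; rewrite -sqrf_eq0 expr2; apply/eqP/u2_0.
by apply: big1 => k _; rewrite u0 mul0r.
Qed.

Lemma sumr_sqr_dotr_comb (a c : R) u v :
  \sum_(k < d) (a * v 0 k - c * u 0 k) ^+ 2
  = a ^+ 2 * dotr v v - 2 * a * c * dotr u v + c ^+ 2 * dotr u u.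
Proof.
rewrite /dotr !mulr_sumr -sumrB -big_split /=.
by apply: eq_bigr => k _; ring.
Qed.

(* Expanding |(u.u) v - (u.v) u|^2 >= 0 gives (u.u) ((u.u)(v.v) - (u.v)^2) >= 0. *)
Lemma dotr_sqr_le u v : dotr u v ^+ 2 <= dotr u u * dotr v v.
Proof.
have [uu_gt0 | uu_le0] := ltrP 0 (dotr u u); last first.
  have uu0 : dotr u u = 0 by apply/eqP; rewrite eq_le uu_le0 dotr_ge0.
  by rewrite dotr_eq0 // uu0 expr0n mul0r.
have : 0 <= \sum_(k < d) (dotr u u * v 0 k - dotr u v * u 0 k) ^+ 2.
  by apply: sumr_ge0 => k _; apply: sqr_ge0.
rewrite sumr_sqr_dotr_comb; have := dotr_ge0 v.
nra.
Qed.

Lemma ler_abs_dotr u v : `|dotr u v| <= enorm u * enorm v.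
Proof. by rewrite /enorm -sqrtrM ?dotr_ge0 // -sqrtr_sqr ler_wsqrtr ?dotr_sqr_le. Qed.

End EuclideanSpace.

Lemma metric_gt0 (R : realType) (d : nat) (M : pred 'rV[R]_d) dM p q :
  is_metric_on M dM -> M p -> M q -> p != q -> 0 < dM p q.
Proof.
case=> dM_ge0 dM_eq0 _ _ Mp Mq pq; rewrite lt0r dM_ge0 // andbT.
by apply: contra pq => /eqP /(dM_eq0 _ _ Mp Mq) ->.
Qed.

(* A walk of length 0 joins a vertex only to itself; without a walk the
   distance takes the default value #|V| > 0. *)
Lemma gdist_gt0 (V : finType) (e : rel V) x y : x != y -> (0 < gdist e x y)%N.
Proof.
move=> xy; apply: (big_ind (fun n => 0 < n)%N).
- by apply/card_gt0P; exists x.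
- by move=> m n m_gt0 n_gt0; rewrite leq_min m_gt0 n_gt0.
- case=> [[|n] _] //= /existsP[p /andP[_ /eqP p_y]].
  by move: p_y xy; rewrite tuple0 => /= ->; rewrite eqxx.
Qed.

Theorem theorem4p1 (R : realType) (V : finType) (e : rel V)
  (e_sym : symmetric e) (e_irr : irreflexive e)
  (e_conn : forall i j : V, connect e i j)
  (X : Type) (feat : V -> X) (d : nat)
  (M : pred 'rV[R]_d) (dM : 'rV[R]_d -> 'rV[R]_d -> R)
  (dM_metric : is_metric_on M dM)
  (h : X -> 'rV[R]_d) (h_in_M : forall i : V, M (h (feat i)))
  (h_inj : injective (fun i : V => h (feat i)))
  (w : 'rV[R]_d) (b : R) :
  let z := fun i : V => h (feat i) in
  let y := fun i : V => dotr w (z i) + b in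
  let dG := fun i j : V => ((gdist e i j)%:R : R) in
  let delta_c := max_pairs (fun i j => dG i j / dM (z i) (z j)) in
  let delta_e := max_pairs (fun i j => dM (z i) (z j) / dG i j) in
  let xi := min_pairs (fun i j => enorm (z i - z j) / dM (z i) (z j)) in
  let zeta := max_pairs (fun i j => enorm (z i - z j) / dM (z i) (z j)) in
  let rho := min_pairs (fun i j =>
               `|dotr w (z i - z j)| / (enorm w * enorm (z i - z j))) in
  let beta := enorm w * zeta * delta_e in
  let alpha := enorm w * xi * rho / delta_c in
  0 < rho ->
  forall i j : V, i != j ->
    alpha * dG i j <= `|y i - y j| <= beta * dG i j.
Proof.
move=> z y dG delta_c delta_e xi zeta rho beta alpha rho_gt0 i j ij.
have dG_gt0 : 0 < dG i j by rewrite ltr0n gdist_gt0.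
have dM_gt0 : 0 < dM (z i) (z j).
  by apply: (metric_gt0 dM_metric); rewrite ?h_in_M ?(inj_eq h_inj).
have wn_gt0 : 0 < enorm w * enorm (z i - z j).
  by rewrite lt0r (min_pairs_ratio_den_neq0 rho_gt0 ij) mulr_ge0 ?enorm_ge0.
have dG_le : dG i j <= delta_c * dM (z i) (z j) by apply: max_pairs_ratio.
have dM_le : dM (z i) (z j) <= delta_e * dG i j by apply: max_pairs_ratio.
have xi_le : xi * dM (z i) (z j) <= enorm (z i - z j) by apply: min_pairs_ratio.
have zeta_ge : enorm (z i - z j) <= zeta * dM (z i) (z j).
  by apply: max_pairs_ratio.
have rho_le : rho * (enorm w * enorm (z i - z j)) <= `|dotr w (z i - z j)|.
  by apply: min_pairs_ratio.
have xi_ge0 : 0 <= xi.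
  have [dM_ge0 _ _ _] := dM_metric.
  by apply: min_pairs_ge0 => i' j' _; rewrite divr_ge0 ?enorm_ge0 ?dM_ge0 ?h_in_M.
have y_ij : y i - y j = dotr w (z i - z j) by rewrite dotrBr /y; ring.
rewrite y_ij /alpha /beta; apply/andP; split.
  exact: ratio_chain_lower (enorm_ge0 w) xi_ge0 (ltW rho_gt0) dM_gt0 dG_gt0
           xi_le dG_le rho_le.
exact: ratio_chain_upper (enorm_ge0 w) (enorm_ge0 _) dM_gt0 zeta_ge dM_le
         (ler_abs_dotr _ _).
Qed.
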